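(* Let $T$ be Takagi's function on $[0,1]$, $T(x)=\sum_{n=1}^\infty 2^{-n}\phi^{(n)}(x)$, with $\phi(x)=2x$ on $[0,1/2]$, $\phi(x)=2-2x$ on $[1/2,1]$. Let $S_\infty=\{x\in[0,1]:T'(x)=+\infty\}$ and $S_{-\infty}=\{x\in[0,1]:T'(x)=-\infty\}$. Then $\dim_H S_\infty=\dim_H S_{-\infty}=1$, where $\dim_H$ denotes Hausdorff dimension.
   Context: $T'(x)=\pm\infty$ means the two-sided limit $\lim_{h\to0}(T(x+h)-T(x))/h$ equals $\pm\infty$. *)

From Stdlib Require Import Reals.
From Coquelicot Require Import Coquelicot.
Open Scope R_scope.

Definition tent (x : R) : R := if Rle_dec x (1/2) then 2 * x else 2 - 2 * x.

Definition tent_iter (n : nat) (x : R) : R := Nat.iter n tent x.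

Definition takagi (x : R) : R :=
  Series (fun n : nat => (/ 2) ^ (S n) * tent_iter (S n) x).

(* T'(x) = +oo : (T(x+h)-T(x))/h -> +oo as h -> 0 (h <> 0, x+h in [0,1],
   the domain of T). *)
Definition deriv_pinfty (f : R -> R) (x : R) : Prop :=
  forall M : R, exists d : R, 0 < d /\
    forall h : R, h <> 0 -> Rabs h < d -> 0 <= x + h <= 1 ->
      M < (f (x + h) - f x) / h.

Definition deriv_minfty (f : R -> R) (x : R) : Prop :=
  forall M : R, exists d : R, 0 < d /\
    forall h : R, h <> 0 -> Rabs h < d -> 0 <= x + h <= 1 ->
      (f (x + h) - f x) / h < M.

Definition S_pinf : R -> Prop := fun x => 0 <= x <= 1 /\ deriv_pinfty takagi x.
Definition S_minf : R -> Prop := fun x => 0 <= x <= 1 /\ deriv_minfty takagi x.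

(* Diameter of a subset of R (m_infty for the empty set). *)
Definition diam (U : R -> Prop) : Rbar :=
  Lub_Rbar (fun r => exists x y, U x /\ U y /\ r = Rabs (x - y)).

(* |U|^s, with the convention that the empty set contributes 0 and 0^0 = 1. *)
Definition diam_pow (s : R) (U : R -> Prop) : R :=
  match diam U with
  | Finite d => if Req_EM_T d 0 then (if Req_EM_T s 0 then 1 else 0) else Rpower d s
  | _ => 0
  end.

Definition hausdorff_content (s delta : R) (A : R -> Prop) : Rbar :=
  Glb_Rbar (fun v : R => exists U : nat -> (R -> Prop),
    (forall x, A x -> exists i, U i x) /\
    (forall i, Rbar_le (diam (U i)) (Finite delta)) /\
    is_series (fun i => diam_pow s (U i)) v).

Definition hausdorff_measure (s : R) (A : R -> Prop) : Rbar :=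
  Lub_Rbar (fun v : R => exists delta, 0 < delta /\
    Rbar_le (Finite v) (hausdorff_content s delta A)).

Definition hausdorff_dim (A : R -> Prop) : Rbar :=
  Glb_Rbar (fun s : R => 0 <= s /\ hausdorff_measure s A = Finite 0).

From Stdlib Require Import Reals Lra Lia Bool List FinFun ClassicalEpsilon Classical Wf_nat.
From Coquelicot Require Import Coquelicot.
Import ListNotations.
Open Scope R_scope.

(* Near a point [x] whose tent orbit stays at distance [>= d] from [1/2], the first [n]
   iterates of the tent map are affine on a window of size [2^-n d], so the difference
   quotients of [T] there stay within [1/d] of the partial slope [sum_(k<=n) (phi^k)'(x)].
   In binary, [(phi^(k+1))'(x) = +-1] according to the [k]-th digit, so [T'(x) = +oo] as soon
   as the digits have an unbounded excess of zeros and no digit is followed by a long run of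
   its complement.  Blocks [0 m 1], with [m] among the [2^(2k)] words of length [2k+1] having
   more zeros than ones, can be concatenated freely; the mass distribution principle gives the
   resulting Cantor set dimension [>= 2k/(2k+3)], which tends to [1].  Complementing every
   digit gives [T'(x) = -oo].  The upper bound is that of [[0,1]]. *)

Lemma is_series_half_pow : is_series (fun n => (/2) ^ S n) 1.
Proof.
  assert (Hq : Rabs (/2) < 1) by (rewrite Rabs_pos_eq; lra).
  replace 1 with (/2 * / (1 - /2)) by field.
  apply (is_series_ext (fun n => /2 * (/2) ^ n)); [reflexivity|].
  apply (is_series_scal_l (/2) (fun n => (/2) ^ n)), is_series_geom, Hq.
Qed.

Lemma ex_series_nonneg_le (a b : nat -> R) :
  (forall n, 0 <= a n <= b n) -> ex_series b -> ex_series a.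
Proof.
  intros Hab. apply (@ex_series_le R_AbsRing R_CompleteNormedModule).
  intros n. change (Rabs (a n) <= b n). rewrite Rabs_pos_eq; apply Hab.
Qed.

Lemma Series_ge_term (a : nat -> R) i :
  ex_series a -> (forall n, 0 <= a n) -> a i <= Series a.
Proof.
  intros Ha Hpos.
  assert (Htail : 0 <= Series (fun k => a (S i + k)%nat)).
  { rewrite <- (Rmult_0_l (Series a)), <- Series_scal_l.
    apply Series_le; [intros n; rewrite Rmult_0_l; split; [lra | apply Hpos]|].
    now apply (ex_series_incr_n a (S i)). }
  rewrite (Series_incr_n a (S i)) by (lia || exact Ha). simpl pred.
  destruct i as [|i]; simpl sum_f_R0; [lra|].
  pose proof (cond_pos_sum a i Hpos). lra.
Qed.

Lemma Series_nonneg (a : nat -> R) : ex_series a -> (forall n, 0 <= a n) -> 0 <= Series a.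
Proof. intros Ha Hpos. pose proof (Series_ge_term a 0 Ha Hpos). pose proof (Hpos 0%nat). lra. Qed.

Lemma is_series_nonneg (a : nat -> R) v : is_series a v -> (forall n, 0 <= a n) -> 0 <= v.
Proof.
  intros Hv Hpos. rewrite <- (is_series_unique _ _ Hv).
  apply Series_nonneg; [eexists; exact Hv | exact Hpos].
Qed.

Lemma is_series_zero : is_series (fun _ : nat => 0) 0.
Proof.
  pose proof (is_series_scal_l 0 _ _ is_series_half_pow) as H.
  unfold scal in H; simpl in H; unfold mult in H; simpl in H. rewrite Rmult_0_l in H.
  eapply is_series_ext; [|exact H]. intros n. apply Rmult_0_l.
Qed.

Lemma is_series_indicator_lt n c : is_series (fun i => if Nat.ltb i n then c else 0) (INR n * c).
Proof.
  induction n as [|n IH].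
  - rewrite Rmult_0_l. apply (is_series_ext (fun _ => 0)); [|apply is_series_zero].
    intros i. destruct (Nat.ltb_spec i 0); [lia | reflexivity].
  - apply is_series_decr_1.
    match goal with |- is_series _ ?l => replace l with (INR n * c) end; [exact IH|].
    rewrite S_INR. unfold plus, opp. simpl. ring.
Qed.

Lemma ex_series_half_pow_le (a : nat -> R) :
  (forall n, 0 <= a n <= (/2) ^ S n) -> ex_series a.
Proof. intros Ha. apply (ex_series_nonneg_le _ _ Ha). eexists; apply is_series_half_pow. Qed.

Lemma Series_half_pow_le (a : nat -> R) :
  (forall n, 0 <= a n <= (/2) ^ S n) -> 0 <= Series a <= 1.
Proof.
  intros Ha. pose proof (ex_series_half_pow_le a Ha) as Hex. split.
  - apply Series_nonneg; [exact Hex | apply Ha].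
  - rewrite <- (is_series_unique _ _ is_series_half_pow).
    apply Series_le; [exact Ha | eexists; apply is_series_half_pow].
Qed.

Lemma half_pow_mul_pow k : (/2) ^ k * 2 ^ k = 1.
Proof. rewrite <- Rpow_mult_distr, Rinv_l, pow1 by lra. reflexivity. Qed.

Lemma exists_pow_le x e : 0 <= x < 1 -> 0 < e -> exists n, x ^ n <= e.
Proof.
  intros Hx He.
  destruct (pow_lt_1_zero x ltac:(rewrite Rabs_pos_eq; lra) e He) as [n Hn].
  exists n. pose proof (Hn n (Nat.le_refl n)) as Hxn.
  rewrite Rabs_pos_eq in Hxn by (apply pow_le; lra). lra.
Qed.

Lemma Rle_pow_le1 x m n : 0 <= x <= 1 -> (m <= n)%nat -> x ^ n <= x ^ m.
Proof.
  intros Hx Hmn. induction Hmn as [|n _ IH]; [lra|].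
  simpl. pose proof (pow_le x n ltac:(lra)). nra.
Qed.

Lemma Rpower_pow_base x n s : 0 < x -> Rpower (x ^ n) s = Rpower x s ^ n.
Proof.
  intros Hx. rewrite <- (Rpower_pow n x Hx), Rpower_mult, Rmult_comm, <- Rpower_mult.
  apply Rpower_pow. unfold Rpower. apply exp_pos.
Qed.

Lemma Rpower_inv x s : 0 < x -> Rpower (/ x) s = / Rpower x s.
Proof.
  intros Hx. unfold Rpower. rewrite ln_Rinv, <- exp_Ropp by exact Hx. f_equal. ring.
Qed.

Lemma least_nat (P : nat -> Prop) :
  (exists n, P n) -> exists n, P n /\ forall m, (m < n)%nat -> ~ P m.
Proof.
  intros HP.
  destruct (dec_inh_nat_subset_has_unique_least_element P (fun n => classic (P n)) HP)
    as [n [[Pn Hleast] _]].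
  exists n. split; [exact Pn|]. intros m Hm Pm. pose proof (Hleast m Pm). lia.
Qed.

Fixpoint sum_list {A : Type} (f : A -> R) (l : list A) : R :=
  match l with [] => 0 | a :: l => f a + sum_list f l end.

Lemma sum_list_le {A : Type} (f g : A -> R) l :
  (forall a, In a l -> f a <= g a) -> sum_list f l <= sum_list g l.
Proof.
  induction l as [|a l IH]; simpl; intros H; [lra|].
  pose proof (H a (or_introl eq_refl)). pose proof (IH (fun b Hb => H b (or_intror Hb))). lra.
Qed.

Lemma sum_list_const {A : Type} c (l : list A) : sum_list (fun _ => c) l = INR (length l) * c.
Proof.
  induction l as [|a l IH]; cbn [sum_list length]; [simpl; ring|]. rewrite IH, S_INR. ring.
Qed.

Lemma sum_list_zero {A : Type} (l : list A) : sum_list (fun _ => 0) l = 0.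
Proof. induction l as [|a l IH]; simpl; [reflexivity | rewrite IH; ring]. Qed.

Lemma is_series_sum_list {A : Type} (g : A -> nat -> R) l : (forall a, ex_series (g a)) ->
  is_series (fun i => sum_list (fun a => g a i) l) (sum_list (fun a => Series (g a)) l).
Proof.
  intros Hg. induction l as [|a l IH]; simpl; [apply is_series_zero|].
  apply (is_series_plus (g a) (fun i => sum_list (fun a => g a i) l)); [|exact IH].
  apply Series_correct, Hg.
Qed.

Lemma sum_list_indicator {A : Type} (t : A) c l : 0 <= c -> NoDup l ->
  sum_list (fun a => if excluded_middle_informative (a = t) then c else 0) l <= c.
Proof.
  intros Hc Hl. induction Hl as [|a l Ha Hl IH]; simpl; [lra|].
  destruct (excluded_middle_informative (a = t)) as [-> | _]; [|lra].
  enough (sum_list (fun a => if excluded_middle_informative (a = t) then c else 0) l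
          <= sum_list (fun _ => 0) l) by (rewrite sum_list_zero in *; lra).
  apply sum_list_le. intros b Hb.
  destruct (excluded_middle_informative (b = t)) as [-> | _]; [contradiction | lra].
Qed.

(** * The Takagi function *)

Lemma tent_range x : 0 <= x <= 1 -> 0 <= tent x <= 1.
Proof. unfold tent; destruct Rle_dec; lra. Qed.

Lemma tent_iter_range n x : 0 <= x <= 1 -> 0 <= tent_iter n x <= 1.
Proof. intros Hx. induction n as [|n IH]; [exact Hx | apply tent_range, IH]. Qed.

Lemma tent_iter_succ_r n x : tent_iter (S n) x = tent_iter n (tent x).
Proof. apply Nat.iter_succ_r. Qed.

Lemma takagi_term_bound y n :
  0 <= y <= 1 -> 0 <= (/2) ^ S n * tent_iter (S n) y <= (/2) ^ S n.
Proof.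
  intros Hy. pose proof (tent_iter_range (S n) y Hy). pose proof (pow_lt (/2) (S n) ltac:(lra)).
  nra.
Qed.

Lemma takagi_range y : 0 <= y <= 1 -> 0 <= takagi y <= 1.
Proof. intros Hy. apply Series_half_pow_le. intros n. now apply takagi_term_bound. Qed.

Lemma takagi_tent y : 0 <= y <= 1 -> takagi y = / 2 * tent y + / 2 * takagi (tent y).
Proof.
  intros Hy. unfold takagi.
  rewrite Series_incr_1 by (apply ex_series_half_pow_le; intros n; now apply takagi_term_bound).
  rewrite <- Series_scal_l. f_equal.
  - simpl. ring.
  - apply Series_ext. intros n. rewrite (tent_iter_succ_r (S n)). simpl. ring.
Qed.

Fixpoint takagi_partial (n : nat) (y : R) : R :=
  match n with
  | 0 => 0
  | S n => takagi_partial n y + (/2) ^ S n * tent_iter (S n) y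
  end.

Lemma takagi_split n y : 0 <= y <= 1 ->
  takagi y = takagi_partial n y + (/2) ^ n * takagi (tent_iter n y).
Proof.
  intros Hy. induction n as [|n IH]; [simpl; ring|].
  rewrite IH, (takagi_tent (tent_iter n y)) by (apply tent_iter_range, Hy).
  simpl. ring.
Qed.

(** * Difference quotients *)

Definition tent_slope (a : R) : R := if Rle_dec a (1/2) then 1 else -1.

Lemma tent_slope_stable a u : Rabs u < Rabs (a - 1/2) -> tent_slope (a + u) = tent_slope a.
Proof.
  unfold tent_slope, Rabs. do 2 destruct Rcase_abs; do 2 destruct Rle_dec; lra.
Qed.

Lemma tent_affine a u : Rabs u < Rabs (a - 1/2) -> tent (a + u) = tent a + 2 * tent_slope a * u.
Proof.
  unfold tent, tent_slope, Rabs. do 2 destruct Rcase_abs; do 2 destruct Rle_dec; lra.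
Qed.

(* [iter_slope n x] is the slope of the affine piece of [tent_iter n] through [x]. *)
Fixpoint iter_slope (n : nat) (x : R) : R :=
  match n with
  | 0 => 1
  | S n => iter_slope n x * tent_slope (tent_iter n x)
  end.

Lemma Rabs_iter_slope n x : Rabs (iter_slope n x) = 1.
Proof.
  induction n as [|n IH]; simpl; [apply Rabs_R1|].
  rewrite Rabs_mult, IH. unfold tent_slope.
  destruct Rle_dec; [rewrite Rabs_R1 | rewrite Rabs_left by lra]; ring.
Qed.

Fixpoint partial_slope (m : nat) (y : R) : R :=
  match m with
  | 0 => 0
  | S m => partial_slope m y + iter_slope (S m) y
  end.

Section AffineIterates.

Variables (x h : R) (n : nat).
Hypothesis iterates_away : forall k, (k < n)%nat -> 2 ^ k * Rabs h < Rabs (tent_iter k x - 1/2).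

Lemma tent_iter_affine m : (m <= n)%nat ->
  tent_iter m (x + h) = tent_iter m x + iter_slope m x * 2 ^ m * h.
Proof.
  induction m as [|m IH]; intros Hm; [simpl; ring|].
  change (tent_iter (S m) (x + h)) with (tent (tent_iter m (x + h))).
  rewrite IH by lia. rewrite tent_affine; [simpl; ring|].
  rewrite !Rabs_mult, Rabs_iter_slope, (Rabs_pos_eq (2 ^ m)) by (apply pow_le; lra).
  rewrite Rmult_1_l. apply iterates_away. lia.
Qed.

Lemma iter_slope_stable m : (m <= n)%nat -> iter_slope m (x + h) = iter_slope m x.
Proof.
  induction m as [|m IH]; intros Hm; [reflexivity|]. simpl.
  rewrite IH, tent_iter_affine by lia. rewrite tent_slope_stable; [reflexivity|].
  rewrite !Rabs_mult, Rabs_iter_slope, (Rabs_pos_eq (2 ^ m)) by (apply pow_le; lra).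
  rewrite Rmult_1_l. apply iterates_away. lia.
Qed.

Lemma takagi_partial_affine m : (m <= n)%nat ->
  takagi_partial m (x + h) - takagi_partial m x = h * partial_slope m x.
Proof.
  induction m as [|m IH]; intros Hm; cbn [takagi_partial partial_slope]; [ring|].
  rewrite (tent_iter_affine (S m)) by lia.
  transitivity (takagi_partial m (x + h) - takagi_partial m x
                + ((/2) ^ S m * 2 ^ S m) * iter_slope (S m) x * h); [simpl; ring|].
  rewrite IH, half_pow_mul_pow by lia. ring.
Qed.

Lemma takagi_quotient_approx : 0 <= x <= 1 -> 0 <= x + h <= 1 -> h <> 0 ->
  Rabs ((takagi (x + h) - takagi x) / h - partial_slope n x) <= / (2 ^ n * Rabs h).
Proof.
  intros Hx Hxh Hh.
  rewrite (takagi_split n (x + h) Hxh), (takagi_split n x Hx).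
  set (D := takagi (tent_iter n (x + h)) - takagi (tent_iter n x)).
  assert (HD : Rabs D <= 1).
  { pose proof (takagi_range _ (tent_iter_range n _ Hxh)).
    pose proof (takagi_range _ (tent_iter_range n _ Hx)). unfold D. apply Rabs_le. lra. }
  assert (Hslope : partial_slope n x = (takagi_partial n (x + h) - takagi_partial n x) / h)
    by (rewrite (takagi_partial_affine n (Nat.le_refl n)); field; exact Hh).
  replace ((takagi_partial n (x + h) + (/2) ^ n * takagi (tent_iter n (x + h))
            - (takagi_partial n x + (/2) ^ n * takagi (tent_iter n x))) / h - partial_slope n x)
    with ((/2) ^ n * D / h) by (rewrite Hslope; unfold D; field; exact Hh).
  assert (Hp : 0 < 2 ^ n) by (apply pow_lt; lra).
  assert (Hah : 0 < Rabs h) by (apply Rabs_pos_lt; exact Hh).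
  unfold Rdiv. rewrite !Rabs_mult, Rabs_inv, Rabs_pos_eq by (apply pow_le; lra).
  rewrite pow_inv, Rinv_mult.
  apply Rmult_le_compat_r; [left; apply Rinv_0_lt_compat, Hah|].
  rewrite <- (Rmult_1_r (/ 2 ^ n)) at 2.
  apply Rmult_le_compat_l; [left; apply Rinv_0_lt_compat, Hp | exact HD].
Qed.

End AffineIterates.

(* Take [n] least with [d <= 2 ^ n |h|]: the first [n] iterates are then affine between
   [x] and [x + h]. *)
Lemma takagi_quotient_near x d : 0 <= x <= 1 -> 0 < d ->
  (forall k, d <= Rabs (tent_iter k x - 1/2)) ->
  forall N h, h <> 0 -> Rabs h < d * (/2) ^ N -> 0 <= x + h <= 1 ->
  exists n, (N <= n)%nat /\
    Rabs ((takagi (x + h) - takagi x) / h - partial_slope n x) <= / d.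
Proof.
  intros Hx Hd Haway N h Hh Hsmall Hxh.
  assert (Hah : 0 < Rabs h) by (apply Rabs_pos_lt; exact Hh).
  destruct (least_nat (fun n => d <= 2 ^ n * Rabs h)) as [n [Hn Hleast]].
  { destruct (exists_pow_le (/2) (Rabs h / d) ltac:(lra) ltac:(apply Rdiv_lt_0_compat; lra))
      as [k Hk].
    exists k. pose proof (half_pow_mul_pow k). pose proof (pow_lt 2 k ltac:(lra)).
    apply Rmult_le_compat_r with (r := d) in Hk; [|lra].
    replace (Rabs h / d * d) with (Rabs h) in Hk by (field; lra). nra. }
  assert (Hbelow : forall k, (k < n)%nat -> 2 ^ k * Rabs h < d)
    by (intros k Hk; apply Rnot_le_lt, Hleast, Hk).
  exists n. split.
  - destruct (Nat.le_gt_cases N n) as [|HnN]; [assumption|].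
    exfalso. apply (Rle_not_lt _ _ Hn).
    apply Rle_lt_trans with (2 ^ N * Rabs h).
    + apply Rmult_le_compat_r; [lra | apply Rle_pow; [lra | lia]].
    + apply Rmult_lt_compat_l with (r := 2 ^ N) in Hsmall; [|apply pow_lt; lra].
      replace (2 ^ N * (d * (/2) ^ N)) with (d * ((/2) ^ N * 2 ^ N)) in Hsmall by ring.
      rewrite half_pow_mul_pow in Hsmall. lra.
  - eapply Rle_trans.
    + apply takagi_quotient_approx; try assumption.
      intros k Hk. eapply Rlt_le_trans; [apply Hbelow, Hk | apply Haway].
    + apply Rinv_le_contravar; lra.
Qed.

Lemma takagi_deriv_pinfty x d : 0 <= x <= 1 -> 0 < d ->
  (forall k, d <= Rabs (tent_iter k x - 1/2)) ->
  (forall M, exists N, forall n, (N <= n)%nat -> M < partial_slope n x) ->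
  deriv_pinfty takagi x.
Proof.
  intros Hx Hd Haway Hgrow M. destruct (Hgrow (M + / d)) as [N HN].
  exists (d * (/2) ^ N). split; [apply Rmult_lt_0_compat; [lra | apply pow_lt; lra]|].
  intros h Hh Hsmall Hxh.
  destruct (takagi_quotient_near x d Hx Hd Haway N h Hh Hsmall Hxh) as [n [Hn Happrox]].
  apply Rabs_le_between in Happrox. specialize (HN n Hn). lra.
Qed.

Lemma takagi_deriv_minfty x d : 0 <= x <= 1 -> 0 < d ->
  (forall k, d <= Rabs (tent_iter k x - 1/2)) ->
  (forall M, exists N, forall n, (N <= n)%nat -> partial_slope n x < M) ->
  deriv_minfty takagi x.
Proof.
  intros Hx Hd Haway Hgrow M. destruct (Hgrow (M - / d)) as [N HN].
  exists (d * (/2) ^ N). split; [apply Rmult_lt_0_compat; [lra | apply pow_lt; lra]|].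
  intros h Hh Hsmall Hxh.
  destruct (takagi_quotient_near x d Hx Hd Haway N h Hh Hsmall Hxh) as [n [Hn Happrox]].
  apply Rabs_le_between in Happrox. specialize (HN n Hn). lra.
Qed.

(** * Binary expansions *)

Definition bin_digit (b : nat -> bool) (m : nat) : R := if b m then (/2) ^ S m else 0.

Definition bin (b : nat -> bool) : R := Series (bin_digit b).

Lemma bin_digit_bound b m : 0 <= bin_digit b m <= (/2) ^ S m.
Proof. unfold bin_digit. pose proof (pow_lt (/2) (S m) ltac:(lra)). destruct (b m); lra. Qed.

Lemma ex_series_bin_digit b : ex_series (bin_digit b).
Proof. apply ex_series_half_pow_le, bin_digit_bound. Qed.

Lemma bin_range b : 0 <= bin b <= 1.
Proof. apply Series_half_pow_le, bin_digit_bound. Qed.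

Lemma bin_ext b b' : (forall m, b m = b' m) -> bin b = bin b'.
Proof. intros H. apply Series_ext. intros m. unfold bin_digit. now rewrite H. Qed.

Lemma bin_cons b : bin b = (if b 0%nat then /2 else 0) + /2 * bin (fun m => b (S m)).
Proof.
  unfold bin. rewrite Series_incr_1 by apply ex_series_bin_digit.
  rewrite <- Series_scal_l. f_equal.
  - unfold bin_digit. destruct (b 0%nat); simpl; ring.
  - apply Series_ext. intros n. unfold bin_digit. destruct (b (S n)); simpl; ring.
Qed.

Lemma bin_negb b : bin (fun m => negb (b m)) = 1 - bin b.
Proof.
  unfold bin. rewrite <- (is_series_unique _ _ is_series_half_pow).
  rewrite <- Series_minus by (apply ex_series_bin_digit || (eexists; apply is_series_half_pow)).
  apply Series_ext. intros n. unfold bin_digit. destruct (b n); simpl; ring.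
Qed.

Lemma bin_ge_digit b i : b i = true -> (/2) ^ S i <= bin b.
Proof.
  intros Hi. replace ((/2) ^ S i) with (bin_digit b i) by (unfold bin_digit; now rewrite Hi).
  apply Series_ge_term; [apply ex_series_bin_digit | apply bin_digit_bound].
Qed.

Lemma tent_bin b : tent (bin b) = bin (fun m => xorb (b (S m)) (b 0%nat)).
Proof.
  rewrite (bin_cons b). pose proof (bin_range (fun m => b (S m))).
  destruct (b 0%nat).
  - rewrite (bin_ext (fun m => xorb (b (S m)) true) (fun m => negb (b (S m))))
      by (intros m; apply xorb_true_r).
    rewrite bin_negb. unfold tent. destruct Rle_dec; lra.
  - rewrite (bin_ext (fun m => xorb (b (S m)) false) (fun m => b (S m)))
      by (intros m; apply xorb_false_r).
    unfold tent. destruct Rle_dec; lra.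
Qed.

Definition prev_bit (k : nat) (b : nat -> bool) : bool :=
  match k with 0 => false | S k => b k end.

Definition orbit_bits (k : nat) (b : nat -> bool) (m : nat) : bool :=
  xorb (b (k + m)%nat) (prev_bit k b).

Lemma tent_iter_bin k b : tent_iter k (bin b) = bin (orbit_bits k b).
Proof.
  induction k as [|k IH].
  - apply bin_ext. intros m. apply eq_sym, xorb_false_r.
  - change (tent_iter (S k) (bin b)) with (tent (tent_iter k (bin b))).
    rewrite IH, tent_bin. apply bin_ext. intros m. unfold orbit_bits.
    rewrite Nat.add_0_r, Nat.add_succ_r. cbn [prev_bit Nat.add].
    destruct (b (S (k + m))), (b k), (prev_bit k b); reflexivity.
Qed.

Definition spin (x : bool) : R := if x then -1 else 1.

Lemma spin_xorb x y : spin (xorb x y) = spin x * spin y.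
Proof. destruct x, y; simpl; ring. Qed.

Lemma spin_inj x y : spin x = spin y -> x = y.
Proof. destruct x, y; simpl; intros; lra || reflexivity. Qed.

Lemma bin_away_from_half c i : c (S i) = c 0%nat -> (/2) ^ S (S i) <= Rabs (bin c - 1/2).
Proof.
  intros Hci. rewrite (bin_cons c). pose proof (bin_range (fun m => c (S m))) as Hr.
  destruct (c 0%nat).
  - pose proof (bin_ge_digit (fun m => c (S m)) i ltac:(cbv beta; now rewrite Hci)).
    rewrite Rabs_pos_eq; simpl in *; lra.
  - pose proof (bin_ge_digit (fun m => negb (c (S m))) i ltac:(cbv beta; now rewrite Hci)).
    rewrite bin_negb in *. rewrite Rabs_left1; simpl in *; lra.
Qed.

Lemma tent_slope_bin c : bin c <> 1/2 -> tent_slope (bin c) = spin (c 0%nat).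
Proof.
  rewrite (bin_cons c). pose proof (bin_range (fun m => c (S m))).
  unfold tent_slope, spin. destruct (c 0%nat), Rle_dec; lra.
Qed.

Definition recurrent (L : nat) (b : nat -> bool) : Prop :=
  forall k, exists i, (i < L)%nat /\ b (S k + i)%nat = b k.

Lemma recurrent_orbit_away L b : recurrent L b ->
  forall k, (/2) ^ S L <= Rabs (tent_iter k (bin b) - 1/2).
Proof.
  intros Hrec k. destruct (Hrec k) as [i [Hi Hbi]].
  rewrite tent_iter_bin. eapply Rle_trans; [|apply (bin_away_from_half _ i)].
  - apply Rle_pow_le1; [lra | lia].
  - unfold orbit_bits. replace (k + S i)%nat with (S k + i)%nat by lia.
    now rewrite Hbi, Nat.add_0_r.
Qed.

Lemma recurrent_orbit_ne_half L b : recurrent L b -> forall k, tent_iter k (bin b) <> 1/2.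
Proof.
  intros Hrec k Hhalf. pose proof (recurrent_orbit_away L b Hrec k) as Haway.
  rewrite Hhalf, Rminus_diag, Rabs_R0 in Haway. pose proof (pow_lt (/2) (S L)). lra.
Qed.

Lemma iter_slope_bin b : (forall k, tent_iter k (bin b) <> 1/2) ->
  forall k, iter_slope (S k) (bin b) = spin (b k).
Proof.
  intros Hnh k. induction k as [|k IH].
  - simpl. rewrite tent_slope_bin by exact (Hnh 0%nat). ring.
  - change (iter_slope (S (S k)) (bin b))
      with (iter_slope (S k) (bin b) * tent_slope (tent_iter (S k) (bin b))).
    pose proof (Hnh (S k)) as Hk. rewrite tent_iter_bin in *.
    rewrite IH, tent_slope_bin by exact Hk. unfold orbit_bits. simpl prev_bit.
    rewrite Nat.add_0_r, spin_xorb. destruct (b (S k)), (b k); simpl; ring.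
Qed.

Fixpoint excess (l : list bool) : R :=
  match l with nil => 0 | x :: l => spin x + excess l end.

Lemma excess_app l l' : excess (l ++ l') = excess l + excess l'.
Proof. induction l as [|x l IH]; simpl; [ring | rewrite IH; ring]. Qed.

Lemma partial_slope_bin b : (forall k, tent_iter k (bin b) <> 1/2) ->
  forall n, partial_slope n (bin b) = excess (map b (seq 0 n)).
Proof.
  intros Hnh n. induction n as [|n IH]; [reflexivity|].
  cbn [partial_slope]. rewrite IH, iter_slope_bin, seq_S, map_app, excess_app by exact Hnh.
  simpl. ring.
Qed.

Definition agree (n : nat) (p q : nat -> bool) : Prop := forall m, (m < n)%nat -> p m = q m.

Lemma bin_separated L b b' n : recurrent L b -> recurrent L b' ->
  Rabs (bin b' - bin b) < (/2) ^ S L * (/2) ^ n -> agree n b' b.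
Proof.
  intros Hrec Hrec' Hclose k Hk.
  set (h := bin b' - bin b).
  assert (Hsep : forall j, (j < n)%nat -> 2 ^ j * Rabs h < Rabs (tent_iter j (bin b) - 1/2)).
  { intros j Hj. eapply Rlt_le_trans; [|apply (recurrent_orbit_away L b Hrec)].
    assert (Hjn : 2 ^ j * (/2) ^ n <= 1).
    { rewrite <- (half_pow_mul_pow j), Rmult_comm.
      apply Rmult_le_compat_r; [apply pow_le; lra | apply Rle_pow_le1; lra || lia]. }
    apply Rlt_le_trans with (2 ^ j * ((/2) ^ S L * (/2) ^ n)).
    - apply Rmult_lt_compat_l; [apply pow_lt; lra | exact Hclose].
    - pose proof (pow_lt (/2) (S L) ltac:(lra)). nra. }
  apply spin_inj.
  rewrite <- (iter_slope_bin b' (recurrent_orbit_ne_half L b' Hrec')).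
  rewrite <- (iter_slope_bin b (recurrent_orbit_ne_half L b Hrec)).
  replace (bin b') with (bin b + h) by (unfold h; ring).
  apply (iter_slope_stable (bin b) h n Hsep). lia.
Qed.

(** * Blockwise sequences *)

Fixpoint all_words (n : nat) : list (list bool) :=
  match n with
  | 0 => [[]]
  | S n => map (cons false) (all_words n) ++ map (cons true) (all_words n)
  end.

Lemma length_in_all_words n w : In w (all_words n) -> length w = n.
Proof.
  revert w; induction n as [|n IH]; simpl; intros w Hw.
  - destruct Hw as [<- | []]; reflexivity.
  - apply in_app_or in Hw.
    destruct Hw as [Hw | Hw]; apply in_map_iff in Hw; destruct Hw as [v [<- Hv]];
      simpl; f_equal; apply IH, Hv.
Qed.

Lemma all_words_card n : length (all_words n) = (2 ^ n)%nat.
Proof. induction n as [|n IH]; simpl; [reflexivity|]. rewrite length_app, !length_map. lia. Qed.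

Lemma cons_injective (x : bool) : Injective (cons x).
Proof. intros v w H. now injection H. Qed.

Lemma NoDup_all_words n : NoDup (all_words n).
Proof.
  induction n as [|n IH]; simpl; [repeat constructor; simpl; tauto|].
  apply NoDup_app; try (apply Injective_map_NoDup; [apply cons_injective | exact IH]).
  intros w H1 H2. apply in_map_iff in H1, H2.
  destruct H1 as [? [<- _]], H2 as [? [H _]]. discriminate.
Qed.

Lemma filter_all_words_negb n (Q : list bool -> bool) :
  length (filter (fun w => Q (map negb w)) (all_words n)) = length (filter Q (all_words n)).
Proof.
  revert Q; induction n as [|n IH]; intros Q; simpl; [reflexivity|].
  rewrite !filter_app, !length_app, !filter_map_swap, !length_map. simpl.
  rewrite (IH (fun w => Q (true :: w))), (IH (fun w => Q (false :: w))). lia.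
Qed.

Definition zero_heavy (w : list bool) : bool :=
  Nat.ltb (count_occ bool_dec w true) (count_occ bool_dec w false).

Lemma count_occ_true_false w :
  (count_occ bool_dec w true + count_occ bool_dec w false)%nat = length w.
Proof. induction w as [|[] w IH]; simpl; lia. Qed.

Lemma zero_heavy_negb w : Nat.odd (length w) = true ->
  zero_heavy (map negb w) = negb (zero_heavy w).
Proof.
  intros Hodd. unfold zero_heavy.
  assert (Hneg : forall x, count_occ bool_dec (map negb w) (negb x) = count_occ bool_dec w x)
    by (intros x; symmetry; apply count_occ_map; intros [] []; simpl; congruence).
  pose proof (Hneg true) as Ht. pose proof (Hneg false) as Hf. simpl negb in Ht, Hf.
  rewrite Ht, Hf.
  pose proof (count_occ_true_false w) as Hsum.
  assert (Hne : count_occ bool_dec w true <> count_occ bool_dec w false).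
  { intros Heq. rewrite <- Hsum, Heq in Hodd.
    replace (_ + _)%nat with (2 * count_occ bool_dec w false)%nat in Hodd by lia.
    rewrite Nat.odd_mul in Hodd. discriminate. }
  simpl negb.
  destruct (Nat.ltb_spec (count_occ bool_dec w true) (count_occ bool_dec w false)),
    (Nat.ltb_spec (count_occ bool_dec w false) (count_occ bool_dec w true)); simpl; lia.
Qed.

Lemma zero_heavy_card k :
  length (filter zero_heavy (all_words (S (2 * k)))) = (2 ^ (2 * k))%nat.
Proof.
  pose proof (filter_length zero_heavy (all_words (S (2 * k)))) as Hsplit.
  rewrite all_words_card in Hsplit.
  rewrite <- (filter_all_words_negb (S (2 * k)) (fun w => negb (zero_heavy w))) in Hsplit.
  rewrite (filter_ext_in (fun w => negb (zero_heavy (map negb w))) zero_heavy) in Hsplit.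
  - rewrite Nat.pow_succ_r' in Hsplit. lia.
  - intros w Hw. rewrite zero_heavy_negb, negb_involutive; [reflexivity|].
    rewrite (length_in_all_words _ _ Hw), Nat.odd_succ, Nat.even_mul. reflexivity.
Qed.

Lemma excess_count w :
  excess w = INR (count_occ bool_dec w false) - INR (count_occ bool_dec w true).
Proof.
  induction w as [|[] w IH]; cbn -[INR]; rewrite ?IH, ?S_INR; simpl; ring.
Qed.

Lemma zero_heavy_excess w : zero_heavy w = true -> 1 <= excess w.
Proof.
  unfold zero_heavy. rewrite Nat.ltb_lt, excess_count. intros Hlt.
  apply le_INR in Hlt. rewrite S_INR in Hlt. lra.
Qed.

Lemma excess_xorb be w : excess (map (xorb be) w) = spin be * excess w.
Proof.
  induction w as [|x w IH]; simpl; [ring|]. rewrite IH, spin_xorb. ring.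
Qed.

Lemma Rabs_excess w : Rabs (excess w) <= INR (length w).
Proof.
  induction w as [|x w IH]; simpl excess; [rewrite Rabs_R0; simpl; lra|].
  rewrite length_cons, S_INR. eapply Rle_trans; [apply Rabs_triang|].
  assert (Rabs (spin x) = 1)
    by (destruct x; simpl; [rewrite Rabs_left by lra; ring | apply Rabs_R1]).
  lra.
Qed.

Definition block_len (k : nat) : nat := (2 * k + 3)%nat.

Definition frame (m : list bool) : list bool := false :: m ++ [true].

Definition words (k : nat) (be : bool) : list (list bool) :=
  map (fun m => map (xorb be) (frame m)) (filter zero_heavy (all_words (S (2 * k)))).

Lemma words_card k be : length (words k be) = (2 ^ (2 * k))%nat.
Proof. unfold words. rewrite length_map. apply zero_heavy_card. Qed.

Lemma NoDup_words k be : NoDup (words k be).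
Proof.
  apply Injective_map_NoDup; [|apply NoDup_filter, NoDup_all_words].
  intros m m' H. apply (f_equal (map (xorb be))) in H. rewrite !map_map in H.
  rewrite !(map_ext (fun x => xorb be (xorb be x)) (fun x => x)), !map_id in H
    by (intros x; destruct be, x; reflexivity).
  injection H as H. now apply app_inv_tail in H.
Qed.

Lemma words_spec k be w : In w (words k be) ->
  length w = block_len k /\ nth 0 w false = be /\
  nth (block_len k - 1) w false = negb be /\ 1 <= spin be * excess w.
Proof.
  unfold words. rewrite in_map_iff. intros [m [<- Hm]].
  apply filter_In in Hm. destruct Hm as [Hm Hheavy].
  apply length_in_all_words in Hm. unfold frame, block_len. repeat split.
  - rewrite length_map. simpl. rewrite length_app, Hm. simpl. lia.
  - simpl. apply xorb_false_r.
  - replace (2 * k + 3 - 1)%nat with (S (length m)) by lia.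
    rewrite map_cons, map_app. simpl. rewrite app_nth2 by (rewrite length_map; lia).
    rewrite length_map, Nat.sub_diag. apply xorb_true_r.
  - rewrite excess_xorb, <- Rmult_assoc.
    replace (spin be * spin be) with 1 by (destruct be; simpl; ring).
    simpl. rewrite excess_app. simpl. apply zero_heavy_excess in Hheavy. lra.
Qed.

Definition block (N j : nat) (b : nat -> bool) : list bool := map b (seq (j * N) N).

Definition blockwise (N : nat) (W : list (list bool)) (b : nat -> bool) : Prop :=
  forall j, In (block N j b) W.

Lemma nth_block N j b r : (r < N)%nat -> nth r (block N j b) false = b (j * N + r)%nat.
Proof.
  intros Hr. unfold block.
  rewrite (nth_indep _ false (b 0%nat)) by (rewrite length_map, length_seq; exact Hr).
  now rewrite map_nth, seq_nth.
Qed.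

Lemma blockwise_recurrent N W be b : (0 < N)%nat ->
  (forall w, In w W -> nth 0 w false = be /\ nth (N - 1) w false = negb be) ->
  blockwise N W b -> recurrent (2 * N) b.
Proof.
  intros HN Hends Hb k.
  set (j := S (k / N)).
  pose proof (Nat.div_mod k N ltac:(lia)). pose proof (Nat.mod_upper_bound k N ltac:(lia)).
  destruct (Hends _ (Hb j)) as [Hfirst Hlast].
  rewrite nth_block in Hfirst, Hlast by lia. rewrite Nat.add_0_r in Hfirst.
  assert (k < j * N <= k + N)%nat by (unfold j; simpl; lia).
  destruct (bool_dec (b k) be) as [Hk | Hk].
  - exists (j * N - S k)%nat. split; [lia|].
    replace (S k + (j * N - S k))%nat with (j * N)%nat by lia. congruence.
  - exists (j * N + (N - 1) - S k)%nat. split; [lia|].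
    replace (S k + (j * N + (N - 1) - S k))%nat with (j * N + (N - 1))%nat by lia.
    rewrite Hlast. destruct (b k), be; simpl in *; congruence.
Qed.

Lemma blockwise_excess N W be b : (0 < N)%nat ->
  (forall w, In w W -> length w = N /\ 1 <= spin be * excess w) ->
  blockwise N W b -> forall n, INR (n / N) - INR N <= spin be * excess (map b (seq 0 n)).
Proof.
  intros HN Hgain Hb.
  assert (Hblocks : forall j, INR j <= spin be * excess (map b (seq 0 (j * N)))).
  { induction j as [|j IH]; [simpl; lra|].
    replace (S j * N)%nat with (j * N + N)%nat by lia.
    rewrite seq_app, map_app, excess_app, S_INR.
    destruct (Hgain _ (Hb j)) as [_ Hj]. unfold block in Hj. simpl (0 + j * N)%nat. lra. }
  intros n. pose proof (Nat.div_mod n N ltac:(lia)) as Hdiv.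
  pose proof (Nat.mod_upper_bound n N ltac:(lia)).
  rewrite Hdiv at 2. rewrite Nat.mul_comm, seq_app, map_app, excess_app. simpl (0 + _)%nat.
  pose proof (Hblocks (n / N)%nat).
  pose proof (Rabs_excess (map b (seq (n / N * N) (n mod N)))) as Hrest.
  rewrite length_map, length_seq in Hrest. apply Rabs_le_between in Hrest.
  assert (INR (n mod N) <= INR N) by (apply le_INR; lia).
  unfold spin in *. destruct be; lra.
Qed.

Lemma words_recurrent k be b :
  blockwise (block_len k) (words k be) b -> recurrent (2 * block_len k) b.
Proof.
  apply (blockwise_recurrent _ _ be); [unfold block_len; lia|].
  intros w Hw. destruct (words_spec k be w Hw) as [_ [Hfirst [Hlast _]]]. now split.
Qed.

Lemma takagi_deriv_words k be b : blockwise (block_len k) (words k be) b ->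
  if be then deriv_minfty takagi (bin b) else deriv_pinfty takagi (bin b).
Proof.
  intros Hb. set (N := block_len k).
  assert (HN : (0 < N)%nat) by (unfold N, block_len; lia).
  pose proof (words_recurrent k be b Hb) as Hrec.
  pose proof (recurrent_orbit_away _ _ Hrec) as Haway.
  assert (Hd : 0 < (/2) ^ S (2 * N)) by (apply pow_lt; lra).
  assert (Hgrow : forall M, exists N0, forall n, (N0 <= n)%nat ->
    M < spin be * partial_slope n (bin b)).
  { intros M. destruct (INR_unbounded (M + INR N)) as [a Ha]. exists (a * N)%nat.
    intros n Hn. rewrite partial_slope_bin by exact (recurrent_orbit_ne_half _ _ Hrec).
    assert (Hwords : forall w, In w (words k be) -> length w = N /\ 1 <= spin be * excess w)
      by (intros w Hw; destruct (words_spec k be w Hw) as [? [_ [_ ?]]]; now split).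
    pose proof (blockwise_excess N (words k be) be b HN Hwords Hb n).
    assert (Ha_le : (a <= n / N)%nat)
      by (rewrite <- (Nat.div_mul a N) by lia; apply Nat.Div0.div_le_mono; exact Hn).
    apply le_INR in Ha_le. lra. }
  destruct be.
  - apply (takagi_deriv_minfty _ _ (bin_range b) Hd Haway).
    intros M. destruct (Hgrow (- M)) as [N0 HN0]. exists N0. intros n Hn.
    specialize (HN0 n Hn). simpl in HN0. lra.
  - apply (takagi_deriv_pinfty _ _ (bin_range b) Hd Haway).
    intros M. destruct (Hgrow M) as [N0 HN0]. exists N0. intros n Hn.
    specialize (HN0 n Hn). simpl in HN0. lra.
Qed.

(** * Hausdorff measure *)

Lemma diam_le U d : (forall x y, U x -> U y -> Rabs (x - y) <= d) -> Rbar_le (diam U) d.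
Proof.
  intros H. unfold diam. apply Lub_Rbar_correct. intros r [x [y [Hx [Hy ->]]]]. now apply H.
Qed.

Lemma diam_empty U : (forall x, ~ U x) -> diam U = m_infty.
Proof.
  intros H. apply is_lub_Rbar_unique. split.
  - intros r [x [_ [Hx _]]]. exfalso. exact (H x Hx).
  - intros [] _; simpl; tauto.
Qed.

Lemma diam_pair U d x y : diam U = Finite d -> U x -> U y -> Rabs (x - y) <= d.
Proof.
  intros Hd Hx Hy. destruct (Lub_Rbar_correct (fun r => exists x y, U x /\ U y /\ r = Rabs (x - y)))
    as [Hub _].
  fold (diam U) in Hub. rewrite Hd in Hub. apply Hub. now exists x, y.
Qed.

Lemma diam_finite U delta x : Rbar_le (diam U) (Finite delta) -> U x ->
  exists d, diam U = Finite d /\ 0 <= d.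
Proof.
  intros Hle Hx.
  assert (H0 : Rbar_le 0 (diam U)).
  { apply Lub_Rbar_correct. exists x, x. repeat split; try exact Hx.
    now rewrite Rminus_diag, Rabs_R0. }
  destruct (diam U) as [d| |]; simpl in *; try tauto. now exists d.
Qed.

Lemma diam_pow_nonneg s U : 0 <= diam_pow s U.
Proof.
  unfold diam_pow. destruct (diam U); try lra.
  destruct Req_EM_T; [destruct Req_EM_T; lra|]. left. apply exp_pos.
Qed.

Lemma hausdorff_content_le s (delta : R) A (U : nat -> R -> Prop) v :
  (forall x, A x -> exists i, U i x) -> (forall i, Rbar_le (diam (U i)) delta) ->
  is_series (fun i => diam_pow s (U i)) v -> Rbar_le (hausdorff_content s delta A) v.
Proof. intros Hcov Hdiam Hv. apply Glb_Rbar_correct. exists U. auto. Qed.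

Lemma hausdorff_content_ge s (delta : R) A c :
  (forall (U : nat -> R -> Prop) v, (forall x, A x -> exists i, U i x) ->
     (forall i, Rbar_le (diam (U i)) delta) ->
     is_series (fun i => diam_pow s (U i)) v -> c <= v) ->
  Rbar_le c (hausdorff_content s delta A).
Proof.
  intros Hc. apply Glb_Rbar_correct. intros v [U [Hcov [Hdiam Hv]]].
  exact (Hc U v Hcov Hdiam Hv).
Qed.

Lemma hausdorff_content_nonneg s delta A : Rbar_le 0 (hausdorff_content s delta A).
Proof.
  apply hausdorff_content_ge. intros U v _ _ Hv.
  apply (is_series_nonneg _ _ Hv). intros i. apply diam_pow_nonneg.
Qed.

Lemma Rbar_le_0_of_le_eps (x : Rbar) : (forall eps, 0 < eps -> Rbar_le x eps) -> Rbar_le x 0.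
Proof.
  intros H. destruct x as [r| |]; simpl.
  - apply Rnot_lt_le. intros Hr. specialize (H (r / 2) ltac:(lra)). simpl in H. lra.
  - exact (H 1 Rlt_0_1).
  - exact I.
Qed.

Lemma cover_by_intervals h x n : 0 < h -> (0 < n)%nat -> 0 <= x <= INR n * h ->
  exists i, (i < n)%nat /\ INR i * h <= x <= INR (S i) * h.
Proof.
  intros Hh. induction n as [|n IH]; intros Hn Hx; [lia|].
  destruct (Nat.eq_dec n 0) as [-> | Hn0].
  - exists 0%nat. split; [lia|]. simpl in *. lra.
  - destruct (Rle_dec x (INR n * h)) as [Hle | Hgt].
    + destruct (IH ltac:(lia) ltac:(lra)) as [i [Hi Hxi]]. exists i. split; [lia | exact Hxi].
    + exists n. split; [lia | lra].
Qed.

Lemma hausdorff_content_dyadic_le s delta A k : 0 <= s -> (/2) ^ k <= delta ->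
  (forall x, A x -> 0 <= x <= 1) ->
  Rbar_le (hausdorff_content s delta A) (INR (2 ^ k) * Rpower ((/2) ^ k) s).
Proof.
  intros Hs Hk HA. set (h := (/2) ^ k).
  assert (Hh : 0 < h) by (apply pow_lt; lra).
  set (U := fun i x => (i < 2 ^ k)%nat /\ INR i * h <= x <= INR (S i) * h).
  assert (HUdiam : forall i, Rbar_le (diam (U i)) h).
  { intros i. apply diam_le. intros x y [_ Hx] [_ Hy]. rewrite S_INR in *. apply Rabs_le. lra. }
  assert (HUpow : forall i, 0 <= diam_pow s (U i) <= if Nat.ltb i (2 ^ k) then Rpower h s else 0).
  { intros i. split; [apply diam_pow_nonneg|].
    destruct (Nat.ltb_spec i (2 ^ k)) as [Hi | Hi].
    - assert (HUi : U i (INR i * h)) by (split; [exact Hi | rewrite S_INR; lra]).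
      destruct (diam_finite (U i) h _ (HUdiam i) HUi) as [d [Hd Hd0]].
      pose proof (HUdiam i) as Hdh. rewrite Hd in Hdh. simpl in Hdh.
      unfold diam_pow. rewrite Hd.
      destruct Req_EM_T; [|apply Rle_Rpower_l; lra].
      destruct (Req_EM_T s 0) as [-> | _]; [rewrite Rpower_O by exact Hh; lra|].
      left. apply exp_pos.
    - unfold diam_pow. rewrite diam_empty by (intros x [Hx _]; lia). lra. }
  assert (Hex : ex_series (fun i => diam_pow s (U i)))
    by (eapply ex_series_nonneg_le; [exact HUpow | eexists; apply is_series_indicator_lt]).
  apply Rbar_le_trans with (Series (fun i => diam_pow s (U i))).
  - apply (hausdorff_content_le s delta A U); [| | apply Series_correct, Hex].
    + intros x Hx. destruct (cover_by_intervals h x (2 ^ k)) as [i [Hi Hxi]].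
      * exact Hh.
      * apply Nat.neq_0_lt_0, Nat.pow_nonzero. lia.
      * rewrite pow_INR, Rmult_comm. unfold h. rewrite half_pow_mul_pow. simpl. now apply HA.
      * now exists i.
    + intros i. eapply Rbar_le_trans; [apply HUdiam | exact Hk].
  - simpl. rewrite <- (is_series_unique _ _ (is_series_indicator_lt (2 ^ k) (Rpower h s))).
    apply Series_le; [exact HUpow | eexists; apply is_series_indicator_lt].
Qed.

Lemma hausdorff_content_unit_interval_eq_0 s delta A : 1 < s -> 0 < delta ->
  (forall x, A x -> 0 <= x <= 1) -> hausdorff_content s delta A = 0.
Proof.
  intros Hs Hdelta HA. apply Rbar_le_antisym; [|apply hausdorff_content_nonneg].
  apply Rbar_le_0_of_le_eps. intros eps Heps.
  set (q := 2 * Rpower (/2) s).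
  assert (Hq : 0 <= q < 1).
  { unfold q. rewrite Rpower_inv by lra.
    pose proof (Rpower_lt 2 1 s ltac:(lra) Hs). rewrite Rpower_1 in * by lra.
    split; [left; apply Rmult_lt_0_compat; [lra | apply Rinv_0_lt_compat; lra]|].
    apply (Rmult_lt_reg_r (Rpower 2 s)); [lra|]. rewrite Rmult_assoc, Rinv_l by lra. lra. }
  destruct (exists_pow_le (/2) delta ltac:(lra) Hdelta) as [k1 Hk1].
  destruct (exists_pow_le q eps Hq Heps) as [k2 Hk2].
  set (k := Nat.max k1 k2).
  eapply Rbar_le_trans; [apply (hausdorff_content_dyadic_le s delta A k); [lra | | exact HA]|].
  - apply Rle_trans with ((/2) ^ k1); [apply Rle_pow_le1; [lra | lia] | exact Hk1].
  - simpl. rewrite pow_INR, Rpower_pow_base, <- Rpow_mult_distr by lra. simpl.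
    fold q. apply Rle_trans with (q ^ k2); [apply Rle_pow_le1; [lra | lia] | exact Hk2].
Qed.

Lemma hausdorff_measure_eq_0 s A :
  (forall delta, 0 < delta -> hausdorff_content s delta A = 0) -> hausdorff_measure s A = 0.
Proof.
  intros H. apply is_lub_Rbar_unique. split.
  - intros v [delta [Hdelta Hv]]. now rewrite H in Hv.
  - intros b Hb. apply Hb. exists 1. split; [lra|]. rewrite H by lra. simpl. lra.
Qed.

Lemma hausdorff_measure_neq_0 s A c delta : 0 < c -> 0 < delta ->
  Rbar_le c (hausdorff_content s delta A) -> hausdorff_measure s A <> 0.
Proof.
  intros Hc Hdelta Hle H0.
  destruct (Lub_Rbar_correct (fun v => exists delta, 0 < delta /\
    Rbar_le v (hausdorff_content s delta A))) as [Hub _].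
  fold (hausdorff_measure s A) in Hub. rewrite H0 in Hub.
  assert (Hc0 : Rbar_le c 0) by (apply Hub; now exists delta). simpl in Hc0. lra.
Qed.

Lemma hausdorff_dim_eq A t : 0 <= t ->
  (forall s, t < s -> hausdorff_measure s A = 0) ->
  (forall s, 0 <= s < t -> hausdorff_measure s A <> 0) -> hausdorff_dim A = t.
Proof.
  intros Ht Habove Hbelow. apply is_glb_Rbar_unique. split.
  - intros s [Hs Hm]. simpl. apply Rnot_lt_le. intros Hst. exact (Hbelow s (conj Hs Hst) Hm).
  - intros [l| |] Hb; simpl.
    + apply Rnot_lt_le. intros Hlt. set (s := (l + t) / 2).
      assert (Hs : 0 <= s /\ hausdorff_measure s A = 0)
        by (split; [unfold s; lra | apply Habove; unfold s; lra]).
      specialize (Hb s Hs). simpl in Hb. unfold s in Hb. lra.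
    + apply (Hb (t + 1)). split; [lra | apply Habove; lra].
    + exact I.
Qed.

(** * Mass distribution *)

Definition extend (N j : nat) (p : nat -> bool) (w : list bool) : nat -> bool :=
  fun m => if Nat.ltb m (j * N) then p m else nth (m - j * N) w false.

Lemma extend_agree N j p w : agree (j * N) (extend N j p w) p.
Proof. intros m Hm. unfold extend. apply Nat.ltb_lt in Hm. now rewrite Hm. Qed.

Lemma block_agree N j p q : agree (S j * N) p q -> block N j p = block N j q.
Proof.
  intros Hpq. apply map_ext_in. intros m Hm. apply in_seq in Hm. apply Hpq. simpl. lia.
Qed.

Lemma block_extend N j p w : length w = N -> block N j (extend N j p w) = w.
Proof.
  intros Hw. apply nth_ext with (d := false) (d' := false).
  - unfold block. now rewrite length_map, length_seq.
  - intros r Hr. unfold block in Hr. rewrite length_map, length_seq in Hr.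
    rewrite nth_block by exact Hr. unfold extend.
    destruct (Nat.ltb_spec (j * N + r) (j * N)); [lia|]. f_equal. lia.
Qed.

Section MassDistribution.

Variables (N : nat) (W : list (list bool)).
Hypotheses (N_pos : (0 < N)%nat) (W_NoDup : NoDup W)
  (W_length : forall w, In w W -> length w = N) (W_card : (2 <= length W)%nat).

Let mu := / INR (length W).

Lemma mu_pos : 0 < mu.
Proof. apply Rinv_0_lt_compat, lt_0_INR. lia. Qed.

Lemma mu_lt_1 : mu < 1.
Proof.
  unfold mu. rewrite <- Rinv_1.
  apply Rinv_lt_contravar; [rewrite Rmult_1_l; apply lt_0_INR; lia | apply (lt_INR 1); lia].
Qed.

Lemma sum_list_mu_pow j : sum_list (fun _ => mu ^ S j) W = mu ^ j.
Proof.
  rewrite sum_list_const. simpl. rewrite <- Rmult_assoc. unfold mu.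
  rewrite Rinv_r, Rmult_1_l; [reflexivity|]. apply not_0_INR. lia.
Qed.

(* König's lemma for the tree of [W]-blockwise sequences, along a property of prefixes. *)
Lemma blockwise_path (Phi : nat -> (nat -> bool) -> Prop) p0 : Phi 0%nat p0 ->
  (forall j p, Phi j p -> exists w, In w W /\ Phi (S j) (extend N j p w)) ->
  exists b, blockwise N W b /\ forall j, exists p, Phi j p /\ agree (j * N) b p.
Proof.
  intros H0 Hstep.
  set (choose := fun j p => epsilon (inhabits [])
                   (fun w => In w W /\ Phi (S j) (extend N j p w))).
  assert (Hchoose : forall j p, Phi j p ->
    In (choose j p) W /\ Phi (S j) (extend N j p (choose j p)))
    by (intros j p Hp; apply epsilon_spec, Hstep, Hp).
  set (path := fix path (j : nat) : nat -> bool :=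
    match j with 0 => p0 | S j => extend N j (path j) (choose j (path j)) end).
  assert (Hpath_S : forall j, path (S j) = extend N j (path j) (choose j (path j)))
    by reflexivity.
  assert (Hpath : forall j, Phi j (path j)).
  { induction j as [|j IH]; [exact H0 | rewrite Hpath_S; apply Hchoose, IH]. }
  assert (Hmono : forall j j', (j <= j')%nat -> agree (j * N) (path j') (path j)).
  { intros j j' Hj. induction Hj as [|j' Hjj' IH]; intros m Hm; [reflexivity|].
    rewrite Hpath_S, extend_agree by nia. apply IH, Hm. }
  set (b := fun m => path (S (m / N)) m).
  assert (Hb : forall j, agree (j * N) b (path j)).
  { intros j m Hm. unfold b.
    pose proof (Nat.div_mod m N ltac:(lia)). pose proof (Nat.mod_upper_bound m N ltac:(lia)).
    set (i := Nat.min j (S (m / N))).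
    assert (Hi : (m < i * N)%nat) by (unfold i; apply Nat.min_case; nia).
    rewrite (Hmono i (S (m / N))), (Hmono i j) by (exact Hi || unfold i; lia).
    reflexivity. }
  exists b. split.
  - intros j. rewrite (block_agree N j b (path (S j))) by apply Hb.
    rewrite Hpath_S, block_extend; [apply Hchoose, Hpath | apply W_length, Hchoose, Hpath].
  - intros j. exists (path j). split; [apply Hpath | apply Hb].
Qed.

(* An upper bound for the uniform mass of the intersection of the depth-[J] cylinder of [q]
   with the depth-[j] cylinder of [p]. *)
Definition cylinder_weight (J : nat) (q : nat -> bool) (j : nat) (p : nat -> bool) : R :=
  if excluded_middle_informative (agree (Nat.min j J * N) p q) then mu ^ Nat.max j J else 0.

Lemma cylinder_weight_bound J q j p : 0 <= cylinder_weight J q j p <= mu ^ J.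
Proof.
  pose proof mu_pos. pose proof mu_lt_1. unfold cylinder_weight.
  destruct excluded_middle_informative; [|pose proof (pow_le mu J); lra].
  split; [apply pow_le; lra | apply Rle_pow_le1; [lra | lia]].
Qed.

Lemma cylinder_weight_children J q j p :
  sum_list (fun w => cylinder_weight J q (S j) (extend N j p w)) W <= cylinder_weight J q j p.
Proof.
  pose proof mu_pos.
  unfold cylinder_weight at 2. destruct excluded_middle_informative as [Hpq | Hpq].
  - destruct (Nat.le_gt_cases J j) as [HJ | HJ].
    + rewrite Nat.max_l by exact HJ. rewrite <- sum_list_mu_pow.
      apply sum_list_le. intros w _. unfold cylinder_weight.
      destruct excluded_middle_informative; [rewrite Nat.max_l by lia; lra | apply pow_le; lra].
    + rewrite Nat.max_r by lia.
      eapply Rle_trans;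
        [|apply (sum_list_indicator (block N j q)); [apply pow_le; lra | exact W_NoDup]].
      apply sum_list_le. intros w Hw. unfold cylinder_weight.
      destruct excluded_middle_informative as [Hext | _];
        [|destruct excluded_middle_informative; [apply pow_le |]; lra].
      destruct excluded_middle_informative as [_ | Hne]; [rewrite Nat.max_r by lia; lra|].
      exfalso. apply Hne. rewrite <- (block_extend N j p w (W_length w Hw)).
      apply block_agree. rewrite Nat.min_l in Hext by lia. exact Hext.
  - apply Rle_trans with (sum_list (fun _ => 0) W); [|right; apply sum_list_zero].
    apply sum_list_le. intros w _. unfold cylinder_weight.
    destruct excluded_middle_informative as [Hext | _]; [|lra].
    exfalso. apply Hpq. intros m Hm.
    rewrite <- (extend_agree N j p w m) by nia. apply Hext. nia.
Qed.

(* If a cylinder cover had mass [< 1], descending into children while keeping [F j p < mu ^ j]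
   would build a blockwise sequence lying in no cylinder of the cover. *)
Lemma blockwise_cover_mass (J : nat -> nat) (Q : nat -> nat -> bool) total :
  is_series (fun i => mu ^ J i) total ->
  (forall b, blockwise N W b -> exists i, agree (J i * N) b (Q i)) -> 1 <= total.
Proof.
  intros HS Hcover. pose proof mu_pos.
  set (F := fun j p => Series (fun i => cylinder_weight (J i) (Q i) j p)).
  assert (HexF : forall j p, ex_series (fun i => cylinder_weight (J i) (Q i) j p)).
  { intros j p. apply (ex_series_nonneg_le _ (fun i => mu ^ J i));
      [intros i; apply cylinder_weight_bound | now exists total]. }
  assert (Hdescend : forall j p, F j p < mu ^ j ->
    exists w, In w W /\ F (S j) (extend N j p w) < mu ^ S j).
  { intros j p Hlt. apply NNPP. intros Hnone.
    assert (Hchildren : sum_list (fun w => F (S j) (extend N j p w)) W <= F j p).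
    { unfold F. rewrite <- (is_series_unique _ _ (is_series_sum_list _ W (fun w => HexF _ _))).
      apply Series_le; [|apply HexF]. intros i. split; [|apply cylinder_weight_children].
      apply Rle_trans with (sum_list (fun _ => 0) W); [right; symmetry; apply sum_list_zero|].
      apply sum_list_le. intros w _. apply cylinder_weight_bound. }
    assert (Hmass : sum_list (fun _ => mu ^ S j) W
                    <= sum_list (fun w => F (S j) (extend N j p w)) W).
    { apply sum_list_le. intros w Hw. apply Rnot_lt_le. intros Hw'. apply Hnone. now exists w. }
    rewrite sum_list_mu_pow in Hmass. lra. }
  apply Rnot_lt_le. intros HS1.
  destruct (blockwise_path (fun j p => F j p < mu ^ j) (fun _ => false)) as [b [Hb Hpath]].
  - replace (F 0%nat (fun _ => false)) with total; [simpl; lra|].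
    symmetry. apply is_series_unique. eapply is_series_ext; [|exact HS].
    intros i. unfold cylinder_weight. simpl.
    destruct excluded_middle_informative as [_ | Hne]; [reflexivity|].
    exfalso. apply Hne. intros m Hm. lia.
  - exact Hdescend.
  - destruct (Hcover b Hb) as [i Hi]. destruct (Hpath (J i)) as [p [Hp Hbp]].
    assert (Hfull : cylinder_weight (J i) (Q i) (J i) p = mu ^ J i).
    { unfold cylinder_weight. rewrite Nat.min_id, Nat.max_id.
      destruct excluded_middle_informative as [_ | Hne]; [reflexivity|].
      exfalso. apply Hne. intros m Hm. rewrite <- Hbp by exact Hm. apply Hi, Hm. }
    pose proof (Series_ge_term _ i (HexF (J i) p) (fun n => proj1 (cylinder_weight_bound _ _ _ _))).
    unfold F in Hp. lra.
Qed.

Variables (c s : R).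
Hypotheses (c_pos : 0 < c) (s_nonneg : 0 <= s)
  (blockwise_separated : forall b b' n, blockwise N W b -> blockwise N W b' ->
     Rabs (bin b' - bin b) < c * (/2) ^ n -> agree n b' b)
  (mu_le : mu <= Rpower ((/2) ^ N) s).

Let r := Rpower ((/2) ^ N) s.

Lemma r_pos : 0 < r.
Proof. apply exp_pos. Qed.

Lemma Rpower_c_pos : 0 < Rpower c s.
Proof. apply exp_pos. Qed.

Lemma mu_pow_le_scale j d : c * (/2) ^ (S j * N) <= d -> mu ^ j <= Rpower d s / (Rpower c s * r).
Proof.
  intros Hj. pose proof mu_pos. pose proof r_pos. pose proof Rpower_c_pos.
  assert (Hscale : Rpower (c * (/2) ^ (S j * N)) s = Rpower c s * r ^ S j).
  { rewrite <- Rpower_mult_distr by (lra || (apply pow_lt; lra)).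
    rewrite Nat.mul_comm, pow_mult, Rpower_pow_base by (apply pow_lt; lra). reflexivity. }
  apply Rle_trans with (r ^ j); [apply pow_incr; split; [lra | exact mu_le]|].
  apply Rle_trans with (Rpower (c * (/2) ^ (S j * N)) s / (Rpower c s * r)).
  - rewrite Hscale. right. simpl. field. lra.
  - apply Rmult_le_compat_r; [left; apply Rinv_0_lt_compat, Rmult_lt_0_compat; lra|].
    apply Rle_Rpower_l; [exact s_nonneg|]. split; [|exact Hj].
    apply Rmult_lt_0_compat; [lra | apply pow_lt; lra].
Qed.

(* A set of diameter [d] meets at most one cylinder of depth [j], where [j] is the
   least depth whose separation scale [c 2^(-(j+1)N)] drops below [d]. *)
Lemma cylinder_of_set U (delta eps : R) : 0 < eps -> Rbar_le (diam U) delta ->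
  exists j q, (forall b, blockwise N W b -> U (bin b) -> agree (j * N) b q) /\
    mu ^ j <= diam_pow s U / (Rpower c s * r) + eps.
Proof.
  intros Heps Hdiam.
  pose proof mu_pos. pose proof mu_lt_1. pose proof r_pos. pose proof Rpower_c_pos.
  assert (Hcost : 0 <= diam_pow s U / (Rpower c s * r))
    by (apply Rmult_le_pos;
        [apply diam_pow_nonneg | left; apply Rinv_0_lt_compat, Rmult_lt_0_compat; lra]).
  destruct (exists_pow_le mu eps ltac:(lra) Heps) as [j0 Hj0].
  destruct (classic (exists b0, blockwise N W b0 /\ U (bin b0))) as [[b0 [Hb0 HU0]] | Hnone].
  2:{ exists j0, (fun _ => false). split; [|lra].
      intros b Hb HU. exfalso. apply Hnone. now exists b. }
  destruct (diam_finite U delta (bin b0) Hdiam HU0) as [d [Hd Hd0]].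
  destruct (Req_dec d 0) as [-> | Hdnz].
  { exists j0, b0. split; [|lra].
    intros b Hb HU m _. apply (blockwise_separated b0 b (S m) Hb0 Hb); [|lia].
    pose proof (diam_pair U 0 (bin b) (bin b0) Hd HU HU0).
    pose proof (pow_lt (/2) (S m) ltac:(lra)). nra. }
  destruct (least_nat (fun j => c * (/2) ^ (S j * N) <= d)) as [j [Hj Hleast]].
  { destruct (exists_pow_le (/2) (d / c) ltac:(lra) ltac:(apply Rdiv_lt_0_compat; lra)) as [k Hk].
    exists k. apply Rle_trans with (c * (/2) ^ k).
    - apply Rmult_le_compat_l; [lra | apply Rle_pow_le1; [lra | nia]].
    - apply (Rmult_le_compat_l c) in Hk; [|lra].
      replace (c * (d / c)) with d in Hk by (field; lra). exact Hk. }
  exists j, b0. split.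
  - intros b Hb HU. destruct j as [|j]; [intros m Hm; lia|].
    apply (blockwise_separated b0 b); [exact Hb0 | exact Hb |].
    pose proof (diam_pair U d (bin b) (bin b0) Hd HU HU0).
    pose proof (Hleast j (Nat.lt_succ_diag_r j)). lra.
  - unfold diam_pow. rewrite Hd. destruct Req_EM_T as [| _]; [lra|].
    pose proof (mu_pow_le_scale j d Hj). lra.
Qed.

Lemma blockwise_content_lower_bound delta A : (forall b, blockwise N W b -> A (bin b)) ->
  Rbar_le (Rpower c s * r) (hausdorff_content s delta A).
Proof.
  intros HA. pose proof mu_pos. pose proof r_pos. pose proof Rpower_c_pos.
  set (C := Rpower c s * r). assert (HC : 0 < C) by (apply Rmult_lt_0_compat; lra).
  apply hausdorff_content_ge. intros U v Hcov Hdiam Hv.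
  apply Rmult_le_reg_r with (/ C); [apply Rinv_0_lt_compat, HC|].
  rewrite Rinv_r by lra. apply Rnot_lt_le. intros Hlt.
  set (eps := (1 - v * / C) / 2). assert (Heps : 0 < eps) by (unfold eps; lra).
  assert (Hcyl : forall i, exists jq : nat * (nat -> bool),
    (forall b, blockwise N W b -> U i (bin b) -> agree (fst jq * N) b (snd jq)) /\
    mu ^ fst jq <= diam_pow s (U i) / C + eps * (/2) ^ S i).
  { intros i. destruct (cylinder_of_set (U i) delta (eps * (/2) ^ S i)) as [j [q Hjq]].
    - apply Rmult_lt_0_compat; [lra | apply pow_lt; lra].
    - apply Hdiam.
    - now exists (j, q). }
  destruct (choice _ Hcyl) as [pick Hpick].
  set (J := fun i => fst (pick i)).
  assert (Hbound : is_series (fun i => diam_pow s (U i) / C + eps * (/2) ^ S i) (v / C + eps * 1)).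
  { apply (is_series_plus (fun i => diam_pow s (U i) / C) (fun i => eps * (/2) ^ S i)).
    - apply (is_series_ext (fun i => / C * diam_pow s (U i))); [intros i; apply Rmult_comm|].
      replace (v / C) with (/ C * v) by apply Rmult_comm.
      apply (is_series_scal_l (/ C) _ _ Hv).
    - apply (is_series_scal_l eps _ _ is_series_half_pow). }
  assert (Hle : forall i, 0 <= mu ^ J i <= diam_pow s (U i) / C + eps * (/2) ^ S i)
    by (intros i; split; [apply pow_le; lra | apply (Hpick i)]).
  assert (Hex : ex_series (fun i => mu ^ J i))
    by (eapply ex_series_nonneg_le; [exact Hle | eexists; exact Hbound]).
  assert (Hmass : 1 <= Series (fun i => mu ^ J i)).
  { apply (blockwise_cover_mass J (fun i => snd (pick i))); [apply Series_correct, Hex|].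
    intros b Hb. destruct (Hcov (bin b) (HA b Hb)) as [i Hi]. exists i.
    apply (proj1 (Hpick i)); assumption. }
  pose proof (Series_le _ _ Hle (ex_intro _ _ Hbound)) as Hsum.
  rewrite (is_series_unique _ _ Hbound) in Hsum. unfold eps in *. lra.
Qed.

Lemma hausdorff_measure_blockwise_neq_0 A : (forall b, blockwise N W b -> A (bin b)) ->
  hausdorff_measure s A <> 0.
Proof.
  intros HA. apply (hausdorff_measure_neq_0 s A (Rpower c s * r) 1).
  - apply Rmult_lt_0_compat; [apply Rpower_c_pos | apply r_pos].
  - lra.
  - now apply blockwise_content_lower_bound.
Qed.

End MassDistribution.

(** * Dimension of the sets of infinite derivatives *)

Lemma words_mass_bound k be s : INR (block_len k) * s <= INR (2 * k) ->
  / INR (length (words k be)) <= Rpower ((/2) ^ block_len k) s.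
Proof.
  intros Hks.
  rewrite words_card, pow_INR. replace (INR 2) with 2 by (simpl; lra).
  rewrite <- pow_inv, <- !Rpower_pow, Rpower_mult, !Rpower_inv by lra.
  apply Rinv_le_contravar; [unfold Rpower; apply exp_pos|].
  apply Rle_Rpower; lra.
Qed.

Lemma words_card_ge_2 k be : (1 <= k)%nat -> (2 <= length (words k be))%nat.
Proof.
  intros Hk. rewrite words_card. replace (2 * k)%nat with (S (2 * k - 1)) by lia.
  rewrite Nat.pow_succ_r'. pose proof (Nat.pow_nonzero 2 (2 * k - 1)). lia.
Qed.

Lemma exists_block_len_mass s : 0 <= s < 1 ->
  exists k, (1 <= k)%nat /\ INR (block_len k) * s <= INR (2 * k).
Proof.
  intros Hs. destruct (INR_unbounded (3 / (1 - s))) as [k Hk].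
  assert (H3 : 3 <= INR k * (1 - s)).
  { apply (Rmult_lt_compat_r (1 - s)) in Hk; [|lra].
    replace (3 / (1 - s) * (1 - s)) with 3 in Hk by (field; lra). lra. }
  exists k. split; [destruct k; [simpl in H3; lra | lia]|].
  unfold block_len. rewrite plus_INR, !mult_INR.
  replace (INR 2) with 2 by (simpl; lra). replace (INR 3) with 3 by (simpl; lra). nra.
Qed.

Lemma hausdorff_measure_words_neq_0 be s A : 0 <= s < 1 ->
  (forall k b, blockwise (block_len k) (words k be) b -> A (bin b)) ->
  hausdorff_measure s A <> 0.
Proof.
  intros Hs HA. destruct (exists_block_len_mass s Hs) as [k [Hk1 Hmass]].
  apply (hausdorff_measure_blockwise_neq_0 (block_len k) (words k be)
           ltac:(unfold block_len; lia) (NoDup_words k be)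
           (fun w Hw => proj1 (words_spec k be w Hw)) (words_card_ge_2 k be Hk1)
           ((/2) ^ S (2 * block_len k)) s ltac:(apply pow_lt; lra) (proj1 Hs)).
  - intros b b' n Hb Hb'.
    apply (bin_separated _ _ _ _ (words_recurrent k be b Hb) (words_recurrent k be b' Hb')).
  - now apply words_mass_bound.
  - exact (HA k).
Qed.

Lemma hausdorff_dim_unit_interval_eq_1 A : (forall x, A x -> 0 <= x <= 1) ->
  (forall s, 0 <= s < 1 -> hausdorff_measure s A <> 0) -> hausdorff_dim A = 1.
Proof.
  intros HA Hbelow. apply hausdorff_dim_eq; [lra | | exact Hbelow].
  intros s Hs. apply hausdorff_measure_eq_0. intros delta Hdelta.
  now apply hausdorff_content_unit_interval_eq_0.
Qed.

Theorem corollary3 :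
  hausdorff_dim S_pinf = Finite 1 /\ hausdorff_dim S_minf = Finite 1.
Proof.
  split; apply hausdorff_dim_unit_interval_eq_1; try (intros x [Hx _]; exact Hx).
  - intros s Hs. apply (hausdorff_measure_words_neq_0 false s _ Hs).
    intros k b Hb. split; [apply bin_range | exact (takagi_deriv_words k false b Hb)].
  - intros s Hs. apply (hausdorff_measure_words_neq_0 true s _ Hs).
    intros k b Hb. split; [apply bin_range | exact (takagi_deriv_words k true b Hb)].
Qed.
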